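(* Let $\Sigma=\{1,\square,h,s,t\}$ and let $Z$ be the string rewriting system over $\Sigma$ with the seven rules $h11\to 1h$, $11h\square \to 11s\square$, $1s\to s1$, $\square s\to \square h$, $h1\square \to t11\square$, $1t\to t111$, $\square t\to\square h$. There is no dimension $d\geq 1$ and no family of affine maps $[\sigma](x)=M_\sigma x+v_\sigma$ ($\sigma\in\Sigma$, $M_\sigma\in\mathbb{N}^{d\times d}$, $v_\sigma\in\mathbb{N}^d$) such that every $[\sigma]$ is strictly monotone with respect to $>$ (i.e. $x>y$ implies $[\sigma](x)>[\sigma](y)$), for at least one rule $\ell\to r$ of $Z$ we have $[\ell](x)>[r](x)$ for all $x\in\mathbb{N}^d$, and for every remaining rule $\ell'\to r'$ of $Z$ we have $[\ell'](x)\gtrsim[r'](x)$ for all $x\in\mathbb{N}^d$.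
   Context: Strings are finite words over $\Sigma$; the interpretation is extended to strings by $[s_1 s_2\cdots s_n]=[s_1]\circ[s_2]\circ\cdots\circ[s_n]$ (the empty string being the identity). On $\mathbb{N}^d$: $x>y$ iff $x_1>y_1$ and $x_i\geq y_i$ for all $i\in\{2,\dots,d\}$; $x\gtrsim y$ iff $x_i\geq y_i$ for all $i$. *)

From mathcomp Require Import all_boot.
From Stdlib Require List.
Set Implicit Arguments. Unset Strict Implicit. Unset Printing Implicit Defensive.

Inductive sym : Type := One | Box | Hs | Ss | Ts.

Definition rule := (seq sym * seq sym)%type.

Definition Z : list rule :=
  [:: ([:: Hs; One; One], [:: One; Hs]);
      ([:: One; One; Hs; Box], [:: One; One; Ss; Box]);
      ([:: One; Ss], [:: Ss; One]);
      ([:: Box; Ss], [:: Box; Hs]);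
      ([:: Hs; One; Box], [:: Ts; One; One; Box]);
      ([:: One; Ts], [:: Ts; One; One; One]);
      ([:: Box; Ts], [:: Box; Hs])].

(* Vectors in N^d (coordinates indexed by 'I_d; coordinate 0 is "x_1"). *)
Definition vec (d : nat) := 'I_d -> nat.

Definition interp (d : nat) (M : sym -> 'I_d -> 'I_d -> nat) (v : sym -> vec d)
  (a : sym) (x : vec d) : vec d :=
  fun i => (\sum_(j < d) M a i j * x j + v a i)%N.

Definition interp_str (d : nat) (M : sym -> 'I_d -> 'I_d -> nat) (v : sym -> vec d)
  (s : seq sym) (x : vec d) : vec d :=
  foldr (fun a y => interp M v a y) x s.

Definition gtv (d : nat) (x y : vec d) : Prop :=
  (forall i : 'I_d, nat_of_ord i = 0 -> y i < x i) /\
  (forall i : 'I_d, 0 < nat_of_ord i -> y i <= x i).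

Definition gev (d : nat) (x y : vec d) : Prop := forall i : 'I_d, y i <= x i.

Definition rule_in (lr : rule) (R : list rule) : Prop := List.In lr R.

(* Write tape n = box h 1^n box.  Using every rule of Z once or more,
   tape (8m+3) rewrites to tape (9m+4) (two "odd" rounds tripling via t and
   one "even" round halving via s), so such an interpretation would give
   [tape (8m+3)] > [tape (9m+4)].  On the other hand [1] is x |-> A x + b
   with A a nonnegative integer matrix, and for n >= d the powers satisfy
   A^n <= A^(n + L d!) entrywise; hence adding (d+1) d! letters 1 can only
   increase [tape n] for the order >~.  Choosing m + 1 = (d+1) d! yields
   the contradiction on the first coordinate. *)
From mathcomp Require Import all_boot zify.
Set Implicit Arguments. Unset Strict Implicit. Unset Printing Implicit Defensive.

Section MatrixPowers.
Variable d : nat.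

Definition mat := 'I_d -> 'I_d -> nat.

Fixpoint mpow (A : mat) (n : nat) : mat :=
  if n is n'.+1 then fun i j => \sum_(k < d) A i k * mpow A n' k j
  else fun i j => (i == j : nat).

Lemma sum_term (F : 'I_d -> nat) k : F k <= \sum_(i < d) F i.
Proof. by rewrite (bigD1 k) //= leq_addr. Qed.

Lemma sum_delta (F : 'I_d -> nat) i : \sum_(k < d) (i == k) * F k = F i.
Proof.
rewrite (bigD1 i) //= eqxx mul1n big1 ?addn0 // => k /negbTE.
by rewrite eq_sym => ->.
Qed.

Lemma mpowD (A : mat) m n i j :
  mpow A (m + n) i j = \sum_(k < d) mpow A m i k * mpow A n k j.
Proof.
elim: m i j => [|m IH] i j /=; first by rewrite add0n sum_delta.
under eq_bigr => k _ do rewrite IH big_distrr.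
rewrite exchange_big /=; apply: eq_bigr => l _.
by rewrite big_distrl /=; apply: eq_bigr => k _; rewrite mulnA.
Qed.

Lemma mpow_loop (A : mat) l m u : 0 < mpow A l u u -> 0 < mpow A (l * m) u u.
Proof.
move=> H; elim: m => [|m IH]; first by rewrite muln0 /= eqxx.
by rewrite mulnS mpowD (leq_trans _ (sum_term _ u)) // muln_gt0 H IH.
Qed.

Lemma mpow_walk (A : mat) (f : nat -> 'I_d) l c :
  (forall c', c <= c' < c + l -> 0 < A (f c') (f c'.+1)) ->
  0 < mpow A l (f c) (f (c + l)).
Proof.
elim: l c => [|l IH] c H; first by rewrite addn0 /= eqxx.
apply: leq_trans (sum_term _ (f c.+1)); rewrite muln_gt0.
rewrite H ?leqnn ?addnS ?ltnS ?leq_addr //= -addSn IH // => c' /andP[h1 h2].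
by rewrite H // (ltnW h1) addnS -addSn.
Qed.

Definition cyclic (A : mat) (u : 'I_d) : bool := 0 < mpow A d`! u u.

Definition grows (A : mat) (k : nat) (i : 'I_d) : Prop :=
  forall n, k <= n -> forall j, mpow A n i j <= mpow A (n + d`!) i j.

Definition meets_cycle (A : mat) (k : nat) (i : 'I_d) : Prop :=
  forall f : nat -> 'I_d, f 0 = i -> (forall c, c < k -> 0 < A (f c) (f c.+1)) ->
  exists2 c, c <= k & cyclic A (f c).

Lemma cyclic_grows (A : mat) k u : cyclic A u -> grows A k u.
Proof.
move=> Hu n _ j; rewrite addnC mpowD (leq_trans _ (sum_term _ u)) //.
by rewrite -{1}[mpow A n u j]mul1n leq_mul2r; apply/orP; right.
Qed.

Lemma grows_succ (A : mat) k i :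
  (forall j, 0 < A i j -> grows A k j) -> grows A k.+1 i.
Proof.
move=> H [|n] // hn j; rewrite addSn /=; apply: leq_sum => l _.
by case: (posnP (A i l)) => [->|/H Hl] //; rewrite leq_mul2l Hl ?orbT.
Qed.

Lemma meets_cycle_grows (A : mat) k i : meets_cycle A k i -> grows A k i.
Proof.
elim: k i => [|k IH] i Hi.
  have [c|c _ /cyclic_grows //] := Hi (fun=> i) erefl.
  by rewrite ltn0.
have [/cyclic_grows //|acyc] := boolP (cyclic A i).
apply: grows_succ => j Aij; apply: IH => f f0 Hf.
pose g c := if c is c'.+1 then f c' else i.
have [|[|c] Hc Hcyc] := Hi g erefl.
- by case=> [|c] /= hc; [rewrite f0 | apply: Hf].
- by rewrite (negbTE acyc) in Hcyc.
- by exists c.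
Qed.

(* Pigeonhole: a walk through d + 1 vertices closes a cycle of length <= d,
   whose length divides d!. *)
Lemma walk_meets_cycle (A : mat) i : meets_cycle A d i.
Proof.
move=> f _ Hf; pose h (c : 'I_d.+1) : 'I_d := f c.
have /injectivePn[a [b neq_ab hab]] : ~~ injectiveb h.
  by apply/injectiveP => /leq_card; rewrite !card_ord ltnn.
wlog lt_ab : a b neq_ab hab / a < b.
  move=> W; case: (ltngtP a b) => [|lt_ba|/val_inj eq_ab]; first exact: W.
    by apply: (W b a) => //; rewrite eq_sym.
  by rewrite eq_ab eqxx in neq_ab.
have le_bd : b <= d by rewrite -ltnS.
exists a; first exact: leq_trans (ltnW lt_ab) le_bd.
have walk := @mpow_walk A f (b - a) a.
rewrite subnKC ?(ltnW lt_ab) // -[f b]hab in walk.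
have /dvdnP[m def_fact] : b - a %| d`!.
  by rewrite dvdn_fact // subn_gt0 lt_ab (leq_trans (leq_subr _ _)).
rewrite /cyclic def_fact mulnC mpow_loop // walk // => c /andP[_ hc].
by apply: Hf; apply: leq_trans hc le_bd.
Qed.

Lemma mpow_pump (A : mat) n L i j : d <= n -> mpow A n i j <= mpow A (n + L * d`!) i j.
Proof.
move=> hn; elim: L => [|L IH]; first by rewrite addn0.
apply: leq_trans IH _; rewrite mulSn addnCA [d`! + _]addnC.
apply: (meets_cycle_grows (@walk_meets_cycle A i)).
exact: leq_trans hn (leq_addr _ _).
Qed.

End MatrixPowers.

Lemma gtv_gev d (x y : vec d) : gtv x y -> gev x y.
Proof.
move=> [h0 h1] i; case: (posnP i) => hi; first by apply: ltnW; apply: h0.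
exact: h1.
Qed.

Lemma gev_trans d (x y z : vec d) : gev x y -> gev y z -> gev x z.
Proof. by move=> h1 h2 i; apply: leq_trans (h2 i) (h1 i). Qed.

Lemma gtv_gev_trans d (x y z : vec d) : gtv x y -> gev y z -> gtv x z.
Proof.
move=> [h0 h1] h2; split=> i hi; first exact: leq_ltn_trans (h2 i) (h0 i hi).
exact: leq_trans (h2 i) (h1 i hi).
Qed.

Lemma gev_gtv_trans d (x y z : vec d) : gev x y -> gtv y z -> gtv x z.
Proof.
move=> h1 [h0 h2]; split=> i hi; first exact: leq_trans (h0 i hi) (h1 i).
exact: leq_trans (h2 i hi) (h1 i).
Qed.

Lemma gtv_gev_contra d (x y : vec d) : 0 < d -> gtv x y -> gev y x -> False.
Proof. by move=> d_gt0 [h0 _] h; have := h0 (Ordinal d_gt0) erefl; rewrite ltnNge h. Qed.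

Section Interpretation.
Variables (d : nat) (M : sym -> 'I_d -> 'I_d -> nat) (v : sym -> vec d).

Local Notation "[ w ]" := (interp_str M v w).

Lemma interp_str_cat u w x : [u ++ w] x = [u] ([w] x).
Proof. exact: foldr_cat. Qed.

Lemma interp_str_gev u x y : gev x y -> gev ([u] x) ([u] y).
Proof.
elim: u => [|a u IH] //= /IH h i; rewrite /interp leq_add2r.
by apply: leq_sum => j _; rewrite leq_mul2l h orbT.
Qed.

Lemma interp_str_gtv u x y :
  (forall a x y, gtv x y -> gtv (interp M v a x) (interp M v a y)) ->
  gtv x y -> gtv ([u] x) ([u] y).
Proof. by move=> Hmono; elim: u => [|a u IH] //= /IH; apply: Hmono. Qed.

Lemma interp_ones n z i :
  [nseq n One] z i = \sum_(j < d) mpow (M One) n i j * z j +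
                     \sum_(m < n) \sum_(j < d) mpow (M One) m i j * v One j.
Proof.
elim: n i => [|n IH] i; first by rewrite big_ord0 addn0 sum_delta.
rewrite [LHS]/= /interp; under eq_bigr => j _ do rewrite IH mulnDr.
rewrite big_split /= big_ord_recl /= sum_delta -!addnA; congr (_ + _).
  under eq_bigr => j _ do rewrite big_distrr /=.
  rewrite exchange_big /=; apply: eq_bigr => k _.
  by rewrite big_distrl /=; apply: eq_bigr => j _; rewrite mulnA.
rewrite addnC; congr (_ + _).
under eq_bigr => j _ do rewrite big_distrr /=.
rewrite exchange_big /=; apply: eq_bigr => m _.
under eq_bigr => j _ do rewrite big_distrr /=.
rewrite exchange_big /=; apply: eq_bigr => k _.
by rewrite big_distrl /=; apply: eq_bigr => j _; rewrite mulnA.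
Qed.

Lemma ones_pump n L z : d <= n -> gev ([nseq (n + L * d`!) One] z) ([nseq n One] z).
Proof.
move=> hn i; rewrite !interp_ones leq_add //.
  by apply: leq_sum => j _; rewrite leq_mul2r mpow_pump ?orbT.
rewrite (big_ord_widen _ (fun m => \sum_(j < d) mpow (M One) m i j * v One j)
           (leq_addr (L * d`!) n)).
by rewrite [leqRHS](bigID (fun m : 'I__ => m < n)) leq_addr.
Qed.

End Interpretation.

Definition r1 : rule := ([:: Hs; One; One], [:: One; Hs]).
Definition r2 : rule := ([:: One; One; Hs; Box], [:: One; One; Ss; Box]).
Definition r3 : rule := ([:: One; Ss], [:: Ss; One]).
Definition r4 : rule := ([:: Box; Ss], [:: Box; Hs]).
Definition r5 : rule := ([:: Hs; One; Box], [:: Ts; One; One; Box]).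
Definition r6 : rule := ([:: One; Ts], [:: Ts; One; One; One]).
Definition r7 : rule := ([:: Box; Ts], [:: Box; Hs]).

Lemma Z_rules : Z = [:: r1; r2; r3; r4; r5; r6; r7].
Proof. by []. Qed.

Lemma rule_eq_dec (r r' : rule) : {r = r'} + {r <> r'}.
Proof. by do 3 decide equality. Qed.

Definition tape (n : nat) : seq sym := Box :: Hs :: nseq n One ++ [:: Box].

Lemma ones_snoc n (w : seq sym) : nseq n.+1 One ++ w = nseq n One ++ One :: w.
Proof. by elim: n => //= n ->. Qed.

Section Derivations.
Variables (d : nat) (M : sym -> 'I_d -> 'I_d -> nat) (v : sym -> vec d).
Hypothesis Hmono : forall a x y, gtv x y -> gtv (interp M v a x) (interp M v a y).
Variable lr : rule.
Hypothesis Hstrict : forall x, gtv (interp_str M v lr.1 x) (interp_str M v lr.2 x).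
Hypothesis Hweak : forall lr', rule_in lr' Z -> lr' <> lr ->
  forall x, gev (interp_str M v lr'.1 x) (interp_str M v lr'.2 x).

Local Notation "[ w ]" := (interp_str M v w).

(* w rewrites to w' using the rules in used: the interpretations decrease weakly,
   and strictly as soon as the strictly decreasing rule lr is among them. *)
Definition derives (used : seq rule) (w w' : seq sym) : Prop :=
  (forall x, gev ([w] x) ([w'] x)) /\ (List.In lr used -> forall x, gtv ([w] x) ([w'] x)).

Lemma derives_rule rho : rule_in rho Z -> derives [:: rho] rho.1 rho.2.
Proof.
move=> rhoZ; split=> [x|[-> | []]]; last exact: Hstrict.
by case: (rule_eq_dec rho lr) => [->|neq]; [exact: gtv_gev | exact: Hweak].
Qed.

Lemma derives_trans R1 R2 a b c :
  derives R1 a b -> derives R2 b c -> derives (R1 ++ R2) a c.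
Proof.
move=> [ge1 gt1] [ge2 gt2]; split=> [x|/(List.in_app_or R1 R2 lr)[/gt1|/gt2] gt x].
- exact: gev_trans (ge1 x) (ge2 x).
- exact: gtv_gev_trans (gt x) (ge2 x).
- exact: gev_gtv_trans (ge1 x) (gt x).
Qed.

Lemma derives_sub R R' a b :
  (forall r, List.In r R' -> List.In r R) -> derives R a b -> derives R' a b.
Proof. by move=> sub [ge gt]; split=> // /sub. Qed.

Lemma derives_pre R u l r : derives R l r -> derives R (u ++ l) (u ++ r).
Proof.
move=> [ge gt]; split=> [x|/gt hgt x]; rewrite !interp_str_cat.
  exact: interp_str_gev.
exact: interp_str_gtv.
Qed.

Lemma derives_suf R w l r : derives R l r -> derives R (l ++ w) (r ++ w).
Proof.
by move=> [ge gt]; split=> [x|/gt hgt x]; rewrite !interp_str_cat; [exact: ge|exact: hgt].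
Qed.

Local Notation ones n := (nseq n One).

Lemma sweep_h k w : derives [:: r1] (Hs :: ones (k.+1 + k.+1) ++ w) (ones k.+1 ++ Hs :: w).
Proof.
have r1Z : rule_in r1 Z by rewrite /rule_in /=; tauto.
have step w' := derives_suf w' (derives_rule r1Z).
elim: k => [|k IH]; first exact: step.
rewrite addnS addSn; apply: derives_sub (derives_trans (step _) (derives_pre [:: One] IH)).
by move=> r /= [<-|[]]; left.
Qed.

Lemma sweep_s k w : derives [:: r3] (ones k.+1 ++ Ss :: w) (Ss :: ones k.+1 ++ w).
Proof.
have r3Z : rule_in r3 Z by rewrite /rule_in /=; tauto.
have step w' := derives_suf w' (derives_rule r3Z).
elim: k => [|k IH]; first exact: step.
apply: derives_sub (derives_trans (derives_pre [:: One] IH) (step _)).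
by move=> r /= [<-|[]]; left.
Qed.

Lemma sweep_t k w : derives [:: r6] (ones k.+1 ++ Ts :: w) (Ts :: ones (3 * k.+1) ++ w).
Proof.
have r6Z : rule_in r6 Z by rewrite /rule_in /=; tauto.
have step w' := derives_suf w' (derives_rule r6Z).
elim: k => [|k IH]; first exact: step.
rewrite mulnS; apply: derives_sub (derives_trans (derives_pre [:: One] IH) (step _)).
by move=> r /= [<-|[]]; left.
Qed.

Lemma tapeS n : tape n.+1 = [:: Box] ++ Hs :: ones n ++ [:: One; Box].
Proof. by rewrite /tape ones_snoc. Qed.

Lemma tapeSS n : tape n.+2 = [:: Box; Hs] ++ ones n ++ [:: One; One; Box].
Proof. by rewrite /tape !ones_snoc. Qed.

Lemma odd_step k : derives [:: r1; r5; r6; r7] (tape (k.+1 + k.+1).+1) (tape (3 * k.+1).+2).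
Proof.
have r5Z : rule_in r5 Z by rewrite /rule_in /=; tauto.
have r7Z : rule_in r7 Z by rewrite /rule_in /=; tauto.
rewrite tapeS tapeSS.
apply: derives_trans (derives_pre [:: Box] (sweep_h k [:: One; Box])) _.
apply: derives_trans (derives_pre (Box :: ones k.+1) (derives_rule r5Z)) _.
apply: derives_trans (derives_pre [:: Box] (sweep_t k [:: One; One; Box])) _.
exact: derives_suf (derives_rule r7Z).
Qed.

Lemma even_step k : derives [:: r1; r2; r3; r4] (tape (k.+2 + k.+2)) (tape k.+2).
Proof.
have r2Z : rule_in r2 Z by rewrite /rule_in /=; tauto.
have r4Z : rule_in r4 Z by rewrite /rule_in /=; tauto.
have fire_r2 : derives [:: r2] ([:: Box] ++ ones k.+2 ++ [:: Hs; Box])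
                               ([:: Box] ++ ones k.+2 ++ [:: Ss; Box]).
  by rewrite !ones_snoc; apply: (derives_pre (Box :: ones k)); exact: derives_rule.
apply: derives_trans (derives_pre [:: Box] (sweep_h k.+1 [:: Box])) _.
apply: derives_trans fire_r2 _.
apply: derives_trans (derives_pre [:: Box] (sweep_s k.+1 [:: Box])) _.
exact: derives_suf (derives_rule r4Z).
Qed.

Lemma tape_loop m : derives Z (tape (8 * m + 3)) (tape (9 * m + 4)).
Proof.
have e1 := odd_step (4 * m).
have e2 := odd_step (6 * m).+1.
have e3 := even_step (9 * m).+2.
have -> : 8 * m + 3 = ((4 * m).+1 + (4 * m).+1).+1 by lia.
have -> : 9 * m + 4 = (9 * m).+4 by lia.
have E1 : (3 * (4 * m).+1).+2 = ((6 * m).+2 + (6 * m).+2).+1 by lia.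
have E2 : (3 * (6 * m).+2).+2 = (9 * m).+4 + (9 * m).+4 by lia.
rewrite E1 in e1; rewrite E2 in e2.
apply: derives_sub (derives_trans e1 (derives_trans e2 e3)).
by rewrite Z_rules /=; tauto.
Qed.

End Derivations.

Lemma tape_pump d (M : sym -> 'I_d -> 'I_d -> nat) (v : sym -> vec d) n L x :
  d <= n -> gev (interp_str M v (tape (n + L * d`!)) x) (interp_str M v (tape n) x).
Proof.
have tapeE k : interp_str M v (tape k) x =
    interp_str M v [:: Box; Hs] (interp_str M v (nseq k One) (interp_str M v [:: Box] x)).
  by rewrite -!interp_str_cat.
by move=> hn; rewrite !tapeE; apply: interp_str_gev; apply: ones_pump.
Qed.

Theorem mainTheorem2 :
  ~ exists (d : nat) (M : sym -> 'I_d -> 'I_d -> nat) (v : sym -> vec d),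
      1 <= d /\
      (forall (a : sym) (x y : vec d), gtv x y -> gtv (interp M v a x) (interp M v a y)) /\
      exists lr : rule,
        rule_in lr Z /\
        (forall x : vec d, gtv (interp_str M v lr.1 x) (interp_str M v lr.2 x)) /\
        (forall lr' : rule, rule_in lr' Z -> lr' <> lr ->
           forall x : vec d, gev (interp_str M v lr'.1 x) (interp_str M v lr'.2 x)).
Proof.
move=> [d [M [v [d_gt0 [Hmono [lr [lrZ [Hstrict Hweak]]]]]]]].
have [m period] : exists m, m.+1 = d.+1 * d`!.
  by exists (d.+1 * d`!).-1; rewrite prednK // muln_gt0 fact_gt0.
have d_le_m : d <= m by rewrite -ltnS period leq_pmulr ?fact_gt0.
(* The loop decreases strictly, although its ends differ by d.+1 * d! letters 1. *)
have [_ loop_gt] := tape_loop Hmono Hstrict Hweak m.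
have pump : gev (interp_str M v (tape (9 * m + 4)) (fun=> 0))
                (interp_str M v (tape (8 * m + 3)) (fun=> 0)).
  have -> : 9 * m + 4 = 8 * m + 3 + d.+1 * d`! by rewrite -period; lia.
  by apply: tape_pump; lia.
exact: gtv_gev_contra d_gt0 (loop_gt lrZ _) pump.
Qed.
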